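(* Let $f_1,\dots,f_T:\mathbb{R}^d\to\mathbb{R}$ be convex differentiable with $\|\nabla f_t(x)\|\le G$ for all $x$ and $t$, and let $f=\sum_{t=1}^Tf_t$. Let $g:\mathbb{R}^d\to\mathbb{R}$ be convex and differentiable, let $\gamma\ge0$, and assume there is a point $x$ with $g(x)<-\gamma$ and that $\min_{x:\,g(x)+\gamma=0}\|\nabla g(x)\|\ge\sigma>0$. Let $x_*$ and $x_\gamma$ be minimizers of $f$ over $\{g(x)\le0\}$ and over $\{g(x)\le-\gamma\}$, respectively (assumed to exist). Then $$|f(x_* )-f(x_\gamma)|\le\frac{G}{\sigma}\gamma T.$$
   Context: All norms are Euclidean. *)

From Stdlib Require Import Reals.
From mathcomp Require Import all_boot.

Set Implicit Arguments.
Unset Strict Implicit.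

Local Open Scope R_scope.

Definition vec (d : nat) := 'I_d -> R.

Definition vadd d (x y : vec d) : vec d := fun i => x i + y i.
Definition vscale d (a : R) (x : vec d) : vec d := fun i => a * x i.

Definition dot d (x y : vec d) : R := \big[Rplus/0]_(i < d) (x i * y i).
Definition vnorm d (x : vec d) : R := sqrt (dot x x).

Definition convex_fun d (f : vec d -> R) : Prop :=
  forall (x y : vec d) (l : R), 0 <= l <= 1 ->
    f (vadd (vscale l x) (vscale (1 - l) y)) <= l * f x + (1 - l) * f y.

Definition has_gradient d (f : vec d -> R) (x gr : vec d) : Prop :=
  forall eps : R, 0 < eps -> exists delta : R, 0 < delta /\
    forall h : vec d, vnorm h < delta ->
      Rabs (f (vadd x h) - f x - dot gr h) <= eps * vnorm h.

Definition is_gradient d (f : vec d -> R) (grad : vec d -> vec d) : Prop :=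
  forall x, has_gradient f x (grad x).

(* f = sum_{t=1}^T f_t, with the f_t indexed by 0, ..., T-1. *)
Definition sum_fun d (T : nat) (ft : nat -> vec d -> R) : vec d -> R :=
  fun x => \big[Rplus/0]_(t < T) ft (nat_of_ord t) x.

(** Let [f = sum_t f_t], so that [|grad f| <= G T].  Since [x_gamma] is
    feasible for the larger set, [f x_* <= f x_gamma].  For the converse bound
    use the first-order optimality of [x_gamma]: no direction [h] decreases
    [f] while keeping [g <= -gamma], i.e. [grad f(x_gamma) . h >= 0] whenever
    [grad g(x_gamma) . h < 0] (or for every [h] when the constraint is slack).
    With [a = grad g(x_gamma)] and [w = x_* - x_gamma], convexity of [g] gives
    [a . w <= gamma], so [h = w - (gamma' / |a|^2) a] is such a direction for
    every [gamma' > gamma].  Together with convexity of [f],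
    [f x_gamma - f x_* <= - grad f . w <= - (gamma' / |a|^2) grad f . a
     <= gamma' G T / |a|], and [|a| >= sigma] on the active constraint. *)

From HB Require Import structures.
From Stdlib Require Import Reals Lra FunctionalExtensionality.
From Coquelicot Require Import Coquelicot.
From mathcomp Require Import all_boot.

Set Implicit Arguments.
Unset Strict Implicit.

Local Open Scope R_scope.

HB.instance Definition _ := Monoid.isComLaw.Build R 0 Rplus
  (fun x y z => esym (Rplus_assoc x y z)) Rplus_comm Rplus_0_l.
HB.instance Definition _ := Monoid.isMulLaw.Build R 0 Rmult Rmult_0_l Rmult_0_r.
HB.instance Definition _ :=
  Monoid.isAddLaw.Build R Rmult Rplus Rmult_plus_distr_r Rmult_plus_distr_l.

Lemma Rle_big n (F1 F2 : 'I_n -> R) :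
  (forall i, F1 i <= F2 i) -> \big[Rplus/0]_(i < n) F1 i <= \big[Rplus/0]_(i < n) F2 i.
Proof.
move=> le12; apply: (big_ind2 (fun a b => a <= b)) => // *; first lra.
exact: Rplus_le_compat.
Qed.

Lemma discriminant_le (A B C : R) :
  0 <= C -> (forall t, 0 <= A + 2 * t * B + t * t * C) -> B * B <= A * C.
Proof.
move=> C_ge0 q_ge0; case: (Rle_lt_or_eq_dec _ _ C_ge0) => [C_gt0 | C0].
  have := q_ge0 (- B / C).
  have -> : A + 2 * (- B / C) * B + - B / C * (- B / C) * C = (A * C - B * B) / C
    by field; lra.
  move=> /(Rmult_le_compat_r C _ _ C_ge0); rewrite Rmult_0_l.
  have -> : (A * C - B * B) / C * C = A * C - B * B by field; lra.
  lra.
case: (Req_dec B 0) => [-> | B_neq0]; first by rewrite -C0; lra.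
have := q_ge0 (- (A + 1) / (2 * B)); rewrite -C0.
have -> : A + 2 * (- (A + 1) / (2 * B)) * B + - (A + 1) / (2 * B) * (- (A + 1) / (2 * B)) * 0
  = -1 by field.
lra.
Qed.

Section Euclidean.

Variable d : nat.
Implicit Types (x y z : vec d) (c : R).

Definition vsum (T : nat) (v : nat -> vec d) : vec d :=
  fun i => \big[Rplus/0]_(t < T) v (nat_of_ord t) i.

Lemma dotC x y : dot x y = dot y x.
Proof. by apply: eq_bigr => i _; rewrite Rmult_comm. Qed.

Lemma dot_addr x y z : dot x (vadd y z) = dot x y + dot x z.
Proof. by rewrite /dot -big_split; apply: eq_bigr => i _; rewrite /vadd Rmult_plus_distr_l. Qed.

Lemma dot_addl x y z : dot (vadd x y) z = dot x z + dot y z.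
Proof. by rewrite dotC dot_addr !(dotC z). Qed.

Lemma dot_scaler x y c : dot x (vscale c y) = c * dot x y.
Proof. by rewrite /dot big_distrr; apply: eq_bigr => i _; rewrite /vscale /=; ring. Qed.

Lemma dot_scalel x y c : dot (vscale c x) y = c * dot x y.
Proof. by rewrite dotC dot_scaler dotC. Qed.

Lemma dot0l y : dot (fun _ => 0) y = 0.
Proof. by rewrite /dot big1 // => i _; rewrite Rmult_0_l. Qed.

Lemma dot_ge0 x : 0 <= dot x x.
Proof.
have -> : 0 = \big[Rplus/0]_(i < d) (0 : R) by rewrite big1.
by apply: Rle_big => i; apply: Rle_0_sqr.
Qed.

Lemma vnorm_ge0 x : 0 <= vnorm x.
Proof. exact: sqrt_pos. Qed.

Lemma vnorm_sqr x : vnorm x * vnorm x = dot x x.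
Proof. exact/sqrt_sqrt/dot_ge0. Qed.

Lemma vnorm0 : vnorm (fun _ : 'I_d => 0) = 0.
Proof. by rewrite /vnorm dot0l sqrt_0. Qed.

Lemma vnorm_scale x c : 0 <= c -> vnorm (vscale c x) = c * vnorm x.
Proof.
move=> c_ge0; rewrite /vnorm dot_scalel dot_scaler -Rmult_assoc.
by rewrite sqrt_mult ?sqrt_square //; [apply: Rmult_le_pos | apply: dot_ge0].
Qed.

Lemma dot_sqr_le x y : dot x y * dot x y <= dot x x * dot y y.
Proof.
apply: discriminant_le; first exact: dot_ge0.
move=> t; have := dot_ge0 (vadd x (vscale t y)).
rewrite !dot_addl !dot_addr !dot_scalel !dot_scaler (dotC y x); lra.
Qed.

Lemma Rabs_dot_le x y : Rabs (dot x y) <= vnorm x * vnorm y.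
Proof.
rewrite /vnorm -sqrt_mult; try exact: dot_ge0.
rewrite -sqrt_Rsqr_abs; exact/sqrt_le_1_alt/dot_sqr_le.
Qed.

Lemma vnorm_triangle x y : vnorm (vadd x y) <= vnorm x + vnorm y.
Proof.
have sum_ge0 : 0 <= vnorm x + vnorm y by have := vnorm_ge0 x; have := vnorm_ge0 y; lra.
rewrite {1}/vnorm -(sqrt_square _ sum_ge0); apply: sqrt_le_1_alt.
have := Rle_abs (dot x y); have := Rabs_dot_le x y.
rewrite dot_addl !dot_addr (dotC y x) -!vnorm_sqr; lra.
Qed.

Lemma vsum0 (v : nat -> vec d) : vsum 0 v = fun _ => 0.
Proof. by apply: functional_extensionality => i; rewrite /vsum big_ord0. Qed.

Lemma vsumS T (v : nat -> vec d) : vsum T.+1 v = vadd (vsum T v) (v T).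
Proof. by apply: functional_extensionality => i; rewrite /vsum /vadd big_ord_recr. Qed.

Lemma vnorm_vsum_le T (v : nat -> vec d) G :
  (forall t, (t < T)%nat -> vnorm (v t) <= G) -> vnorm (vsum T v) <= INR T * G.
Proof.
elim: T => [|T IH] vG; first by rewrite vsum0 vnorm0 /=; lra.
rewrite vsumS S_INR; apply: Rle_trans (vnorm_triangle _ _) _.
have := IH (fun t lt_tT => vG t (ltnW lt_tT)); have := vG T (ltnSn T); lra.
Qed.

End Euclidean.

Lemma at_right0_intro (P : R -> Prop) tau :
  0 < tau -> (forall u, 0 < u < tau -> P u) -> at_right 0 P.
Proof.
move=> tau_gt0 HP; exists (mkposreal _ tau_gt0) => u u_near u_gt0; apply: HP.
move: u_near; rewrite /ball /= /AbsRing_ball /abs /minus /plus /opp /= Ropp_0 Rplus_0_r.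
by have := Rle_abs u; lra.
Qed.

Lemma at_right0_pos : at_right 0 (fun u => 0 < u).
Proof. by apply: (at_right0_intro Rlt_0_1) => u []. Qed.

Lemma at_right0_ex (P : R -> Prop) : at_right 0 P -> exists u, 0 < u /\ P u.
Proof.
by move=> P0; apply: (filter_ex (F := at_right 0)); apply: filter_and _ _ at_right0_pos P0.
Qed.

Lemma at_right0_mul_lt k c : 0 < c -> at_right 0 (fun u => u * k < c).
Proof.
move=> c_gt0; have k1_gt0 : 0 < Rabs k + 1 by have := Rabs_pos k; lra.
apply: (at_right0_intro (tau := c / (Rabs k + 1))) => [|u [u_gt0 u_lt]].
  exact: Rdiv_lt_0_compat.
have : u * (Rabs k + 1) < c.
  by apply: (Rmult_lt_reg_r (/ (Rabs k + 1))); [apply: Rinv_0_lt_compat | field_simplify; lra].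
by have := Rle_abs k; nra.
Qed.

Section Gradient.

Variable d : nat.
Implicit Types (f g : vec d -> R) (x y h gr : vec d).

Lemma has_gradient_along f x gr h eps :
  has_gradient f x gr -> 0 < eps ->
  at_right 0 (fun u => Rabs (f (vadd x (vscale u h)) - f x - u * dot gr h) <= eps * u).
Proof.
move=> grad eps_gt0; have h_ge0 := vnorm_ge0 h.
have h1_gt0 : 0 < vnorm h + 1 by lra.
have [delta [delta_gt0 est]] := grad _ (Rdiv_lt_0_compat _ _ eps_gt0 h1_gt0).
apply: (at_right0_intro (Rdiv_lt_0_compat _ _ delta_gt0 h1_gt0)) => u [u_gt0 u_lt].
have uh_norm : vnorm (vscale u h) = u * vnorm h by apply: vnorm_scale; lra.
have uh1_lt : u * (vnorm h + 1) < delta.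
  by apply: (Rmult_lt_reg_r (/ (vnorm h + 1))); [apply: Rinv_0_lt_compat | field_simplify; lra].
have := est (vscale u h); rewrite dot_scaler uh_norm => /(_ ltac:(nra)) /Rle_trans; apply.
have -> : eps / (vnorm h + 1) * (u * vnorm h) = eps * u * (vnorm h / (vnorm h + 1)) by field; lra.
have : vnorm h / (vnorm h + 1) <= 1.
  by apply: (Rmult_le_reg_r (vnorm h + 1)) => //; field_simplify; lra.
have : 0 < eps * u by apply: Rmult_lt_0_compat.
nra.
Qed.

Lemma convex_gradient_le f x y gr :
  convex_fun f -> has_gradient f x gr -> dot gr (vadd y (vscale (-1) x)) <= f y - f x.
Proof.
move=> f_cvx grad; apply: Rle_plus_epsilon => eps eps_gt0.
set w := vadd y (vscale (-1) x).
have [u [u_gt0 [u_lt1 est]]] :=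
  at_right0_ex (filter_and _ _ (at_right0_mul_lt 1 Rlt_0_1) (has_gradient_along w grad eps_gt0)).
have chord : vadd x (vscale u w) = vadd (vscale u y) (vscale (1 - u) x).
  by apply: functional_extensionality => i; rewrite /w /vadd /vscale; ring.
move: est; rewrite chord => /Rabs_le_between [lower _].
have f_chord := f_cvx y x u ltac:(lra).
apply: (Rmult_le_reg_l u) => //; lra.
Qed.

Lemma has_gradient_cst x c : has_gradient (fun _ => c) x (fun _ => 0).
Proof.
move=> eps eps_gt0; exists 1; split=> [|h _]; first lra.
rewrite dot0l /Rminus Rplus_opp_r Rplus_0_l Ropp_0 Rabs_R0.
by apply: Rmult_le_pos; [lra | apply: vnorm_ge0].
Qed.

Lemma has_gradient_add f g x a b :
  has_gradient f x a -> has_gradient g x b ->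
  has_gradient (fun y => f y + g y) x (vadd a b).
Proof.
move=> fa gb eps eps_gt0; have eps2_gt0 : 0 < eps / 2 by lra.
have [df [df_gt0 estf]] := fa _ eps2_gt0; have [dg [dg_gt0 estg]] := gb _ eps2_gt0.
exists (Rmin df dg); split=> [|h h_lt]; first exact: Rmin_glb_lt.
have := estf h (Rlt_le_trans _ _ _ h_lt (Rmin_l _ _)).
have := estg h (Rlt_le_trans _ _ _ h_lt (Rmin_r _ _)).
have := Rabs_triang (f (vadd x h) - f x - dot a h) (g (vadd x h) - g x - dot b h).
rewrite dot_addl (_ : _ + _ = f (vadd x h) + g (vadd x h) - (f x + g x) - (dot a h + dot b h));
  [lra | ring].
Qed.

Lemma sum_fun0 (ft : nat -> vec d -> R) : sum_fun 0 ft = fun _ => 0.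
Proof. by apply: functional_extensionality => x; rewrite /sum_fun big_ord0. Qed.

Lemma sum_funS T (ft : nat -> vec d -> R) :
  sum_fun T.+1 ft = fun x => sum_fun T ft x + ft T x.
Proof. by apply: functional_extensionality => x; rewrite /sum_fun big_ord_recr. Qed.

Lemma has_gradient_sum_fun T (ft : nat -> vec d -> R) (grt : nat -> vec d) x :
  (forall t, (t < T)%nat -> has_gradient (ft t) x (grt t)) ->
  has_gradient (sum_fun T ft) x (vsum T grt).
Proof.
elim: T => [|T IH] grad; first by rewrite sum_fun0 vsum0; apply: has_gradient_cst.
rewrite sum_funS vsumS; apply: has_gradient_add; last exact: grad.
by apply: IH => t lt_tT; apply/grad/ltnW.
Qed.

Lemma convex_fun_cst c : convex_fun (fun _ : vec d => c).
Proof. by move=> x y l _; lra. Qed.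

Lemma convex_fun_add f g : convex_fun f -> convex_fun g -> convex_fun (fun y => f y + g y).
Proof. by move=> f_cvx g_cvx x y l l01; have := f_cvx x y l l01; have := g_cvx x y l l01; lra. Qed.

Lemma convex_fun_sum_fun T (ft : nat -> vec d -> R) :
  (forall t, (t < T)%nat -> convex_fun (ft t)) -> convex_fun (sum_fun T ft).
Proof.
elim: T => [|T IH] cvx; first by rewrite sum_fun0; apply: convex_fun_cst.
rewrite sum_funS; apply: convex_fun_add; last exact: cvx.
by apply: IH => t lt_tT; apply/cvx/ltnW.
Qed.

End Gradient.

Section SublevelMinimum.

Variable d : nat.
Implicit Types (f g : vec d -> R) (x h gr a : vec d) (c : R).

Lemma has_gradient_descent f x gr h :
  has_gradient f x gr -> dot gr h < 0 -> at_right 0 (fun u => f (vadd x (vscale u h)) < f x).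
Proof.
move=> grad desc; have eps_gt0 : 0 < - dot gr h / 2 by lra.
apply: filter_imp (filter_and _ _ at_right0_pos (has_gradient_along h grad eps_gt0)).
by move=> u [u_gt0 /Rabs_le_between [_ est]]; nra.
Qed.

Lemma has_gradient_sublevel g x a h c :
  has_gradient g x a -> g x <= c -> g x < c \/ dot a h < 0 ->
  at_right 0 (fun u => g (vadd x (vscale u h)) <= c).
Proof.
move=> grad x_feas [slack | desc].
  apply: filter_imp (filter_and _ _ (at_right0_mul_lt (dot a h + 1) (Rlt_Rminus _ _ slack))
    (has_gradient_along h grad Rlt_0_1)).
  by move=> u [small /Rabs_le_between [_ est]]; lra.
have eps_gt0 : 0 < - dot a h / 2 by lra.
apply: filter_imp (filter_and _ _ at_right0_pos (has_gradient_along h grad eps_gt0)).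
by move=> u [u_gt0 /Rabs_le_between [_ est]]; nra.
Qed.

Lemma sublevel_min_first_order f g x gr a h c :
  has_gradient f x gr -> has_gradient g x a -> g x <= c ->
  (forall y, g y <= c -> f x <= f y) -> g x < c \/ dot a h < 0 -> 0 <= dot gr h.
Proof.
move=> grad_f grad_g x_feas x_min feasible_dir; apply: Rnot_lt_le => desc.
have [u [_ [f_lt g_le]]] := at_right0_ex (filter_and _ _
  (has_gradient_descent grad_f desc) (has_gradient_sublevel grad_g x_feas feasible_dir)).
by have := x_min _ g_le; lra.
Qed.

End SublevelMinimum.

Lemma Rle_mul_of_forall_gt (X K c : R) :
  0 <= K -> (forall c', c < c' -> X <= K * c') -> X <= K * c.
Proof.
move=> K_ge0 bound; apply: Rle_plus_epsilon => e e_gt0.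
have K1_gt0 : 0 < K + 1 by lra.
have de_gt0 : 0 < e / (K + 1) by apply: Rdiv_lt_0_compat.
have : K * (e / (K + 1)) <= e.
  by apply: (Rmult_le_reg_r (K + 1)) => //; field_simplify; nra.
by have := bound (c + e / (K + 1)) ltac:(lra); lra.
Qed.

Section ShiftedConstraint.

Variable d : nat.
Implicit Types (f g : vec d -> R) (gr a xs xg : vec d).

Lemma min_shifted_sublevel_le f g gr a xs xg L gamma sigma :
  convex_fun f -> has_gradient f xg gr -> vnorm gr <= L ->
  convex_fun g -> has_gradient g xg a ->
  0 <= gamma -> 0 < sigma -> (g xg = - gamma -> sigma <= vnorm a) ->
  g xs <= 0 -> g xg <= - gamma -> (forall y, g y <= - gamma -> f xg <= f y) ->
  f xg - f xs <= L / sigma * gamma.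
Proof.
move=> f_cvx grad_f gr_le g_cvx grad_g gamma_ge0 sigma_gt0 a_ge xs_feas xg_feas xg_min.
set w := vadd xs (vscale (-1) xg).
have f_lin : dot gr w <= f xs - f xg := convex_gradient_le xs f_cvx grad_f.
have g_lin : dot a w <= g xs - g xg := convex_gradient_le xs g_cvx grad_g.
have L_ge0 : 0 <= L by have := vnorm_ge0 gr; lra.
have K_ge0 : 0 <= L / sigma by apply: Rdiv_le_0_compat.
case: (Rle_lt_or_eq_dec _ _ xg_feas) => [slack | active].
  have := sublevel_min_first_order (h := w) grad_f grad_g xg_feas xg_min (or_introl slack).
  by have := Rmult_le_pos _ _ K_ge0 gamma_ge0; lra.
have a_gt : sigma <= vnorm a := a_ge active.
have aa_gt0 : 0 < dot a a by rewrite -vnorm_sqr; nra.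
apply: Rle_mul_of_forall_gt => // gamma' gamma_lt.
set s := gamma' / dot a a.
set h := vadd w (vscale (- s) a).
have dir : dot a h < 0.
  by rewrite /h dot_addr dot_scaler /s (_ : - _ * _ = - gamma'); [lra | field; lra].
have := sublevel_min_first_order grad_f grad_g xg_feas xg_min (or_intror dir).
rewrite /h dot_addr dot_scaler => h_ge0.
have s_ge0 : 0 <= s by apply: Rdiv_le_0_compat; lra.
have gra : - dot gr a <= L * vnorm a.
  have := Rabs_dot_le gr a; have := Rle_abs (- dot gr a); rewrite Rabs_Ropp.
  by have := vnorm_ge0 a; nra.
have : f xg - f xs <= s * (L * vnorm a) by nra.
have -> : s * (L * vnorm a) = L / vnorm a * gamma' by rewrite /s -vnorm_sqr; field; lra.
have : L / vnorm a <= L / sigma.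
  by apply: Rmult_le_compat_l => //; apply: Rinv_le_contravar.
by nra.
Qed.

End ShiftedConstraint.

Theorem mainTheorem10
  (d T : nat) (ft : nat -> vec d -> R) (gradft : nat -> vec d -> vec d) (G : R)
  (g : vec d -> R) (gradg : vec d -> vec d) (gamma sigma : R)
  (xstar xgamma : vec d) :
  (forall t, (t < T)%nat -> convex_fun (ft t)) ->
  (forall t, (t < T)%nat -> is_gradient (ft t) (gradft t)) ->
  (forall t x, (t < T)%nat -> vnorm (gradft t x) <= G) ->
  convex_fun g ->
  is_gradient g gradg ->
  0 <= gamma ->
  (exists x0 : vec d, g x0 < - gamma) ->
  0 < sigma ->
  (forall x, g x + gamma = 0 -> sigma <= vnorm (gradg x)) ->
  g xstar <= 0 ->
  (forall y, g y <= 0 -> sum_fun T ft xstar <= sum_fun T ft y) ->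
  g xgamma <= - gamma ->
  (forall y, g y <= - gamma -> sum_fun T ft xgamma <= sum_fun T ft y) ->
  Rabs (sum_fun T ft xstar - sum_fun T ft xgamma) <= G / sigma * gamma * INR T.
Proof.
move=> ft_cvx grad_ft grad_ft_le g_cvx grad_g gamma_ge0 _ sigma_gt0 grad_g_ge
  xstar_feas xstar_min xgamma_feas xgamma_min.
have xstar_le : sum_fun T ft xstar <= sum_fun T ft xgamma by apply: xstar_min; lra.
(* No Slater point is needed: [sigma] already bounds the active constraint's gradient. *)
have shift_le := min_shifted_sublevel_le (convex_fun_sum_fun ft_cvx)
  (has_gradient_sum_fun (fun t lt_tT => grad_ft t lt_tT xgamma))
  (vnorm_vsum_le (fun t lt_tT => grad_ft_le t xgamma lt_tT))
  g_cvx (grad_g xgamma) gamma_ge0 sigma_gt0 (fun active => grad_g_ge xgamma ltac:(lra))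
  xstar_feas xgamma_feas xgamma_min.
rewrite Rabs_left1; last lra.
by rewrite (_ : G / sigma * gamma * INR T = INR T * G / sigma * gamma); [lra | field; lra].
Qed.
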